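(* Let $\Pi=(\mathcal{S},\mathcal{R})$ be a CRN protocol and let $S$ be a strongly connected component of its configuration digraph $D^{\Pi}$. Then $D^{\Pi}$ admits a weakly fair infinite path all of whose nodes lie in $S$ if and only if no reaction in $\mathcal{R}$ escapes from $S$.
   Context: A CRN protocol is a pair $\Pi=(\mathcal{S},\mathcal{R})$ with $\mathcal{S}$ a finite set of species and $\mathcal{R}\subset\mathbb{N}^{\mathcal{S}}\times\mathbb{N}^{\mathcal{S}}$ a finite set of reactions $\alpha=(\mathbf{r},\mathbf{p})$ ($\mathbf{r}$ = reactants, $\mathbf{p}$ = products, $\mathbb{N}=\{0,1,2,\dots\}$), where every reaction has $\|\mathbf{r}\|_1\in\{1,2\}$ and $\|\mathbf{r}\|_1\le\|\mathbf{p}\|_1$; for every $\mathbf{r}$ with $1\le\|\mathbf{r}\|_1\le 2$ the set $\mathcal{R}(\mathbf{r})$ of reactions with reactant vector $\mathbf{r}$ is nonempty; reactions with $\mathbf{r}=\mathbf{p}$ are void, and if $(\mathbf{r},\mathbf{r})\in\mathcal{R}$ then $\mathcal{R}(\mathbf{r})=\{(\mathbf{r},\mathbf{r})\}$. A configuration is $\mathbf{c}\in\mathbb{N}^{\mathcal{S}}$ with $\|\mathbf{c}\|_1\ge 1$. A reaction $(\mathbf{r},\mathbf{p})$ is applicable to $\mathbf{c}$ if $\mathbf{r}\le\mathbf{c}$ componentwise; $\operatorname{app}(\mathbf{c})$ is the set of applicable reactions, and then $\alpha(\mathbf{c})=\mathbf{c}-\mathbf{r}+\mathbf{p}$. The protocol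 respects finite density: the set of configurations reachable from any configuration is finite, with molecular counts $O(\|\mathbf{c}\|_1)$. The configuration digraph $D^{\Pi}$ has all configurations as nodes and, for each configuration $\mathbf{c}$ and each $\alpha\in\operatorname{app}(\mathbf{c})$, an $\alpha$-labeled edge from $\mathbf{c}$ to $\alpha(\mathbf{c})$. Infinite paths in $D^{\Pi}$ correspond to executions $\langle\mathbf{c}^t,\alpha^t\rangle_{t\ge0}$ ($\alpha^t\in\operatorname{app}(\mathbf{c}^t)$, $\mathbf{c}^{t+1}=\alpha^t(\mathbf{c}^t)$). An execution (path) is weakly fair if for every $t\ge0$ and every $\alpha\in\operatorname{app}(\mathbf{c}^t)$ there is $t'\ge t$ with $\alpha^{t'}=\alpha$ or $\alpha\notin\operatorname{app}(\mathbf{c}^{t'})$. A reaction $\alpha$ escapes from a component $S$ if for every $\mathbf{c}\in S$, $\alpha\in\operatorname{app}(\mathbf{c})$ and $\alpha(\mathbf{c})\notin S$. *)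

From mathcomp Require Import all_boot.
Set Implicit Arguments. Unset Strict Implicit. Unset Printing Implicit Defensive.

Section CRN.
Variable sp : finType.

Definition vec := {ffun sp -> nat}.
Definition reaction := (vec * vec)%type.   (* (reactants, products) *)

Definition norm1 (v : vec) : nat := \sum_(s : sp) v s.
Definition vle (u v : vec) : bool := [forall s, u s <= v s].

Definition is_config (c : vec) : Prop := 1 <= norm1 c.

Definition applicable (R : seq reaction) (a : reaction) (c : vec) : Prop :=
  a \in R /\ vle a.1 c.

Definition apply_rxn (a : reaction) (c : vec) : vec :=
  [ffun s => c s - a.1 s + a.2 s].

Definition edge (R : seq reaction) (c : vec) (a : reaction) (d : vec) : Prop :=
  is_config c /\ applicable R a c /\ d = apply_rxn a c.

Inductive reach (R : seq reaction) : vec -> vec -> Prop :=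
| reach_refl c : is_config c -> reach R c c
| reach_step c a d e : edge R c a d -> reach R d e -> reach R c e.

Definition is_CRN_protocol (R : seq reaction) : Prop :=
  (forall a, a \in R -> (1 <= norm1 a.1 <= 2) && (norm1 a.1 <= norm1 a.2))
  /\ (forall r : vec, 1 <= norm1 r <= 2 -> exists p, (r, p) \in R)
  /\ (forall r : vec, (r, r) \in R -> forall p, (r, p) \in R -> p = r)
  /\ (forall c, is_config c -> exists s : seq vec, forall d, reach R c d -> d \in s)
  /\ (exists K : nat, forall c d, is_config c -> reach R c d ->
        forall x : sp, d x <= K * norm1 c).

Definition is_SCC (R : seq reaction) (C : vec -> Prop) : Prop :=
  exists c0, is_config c0 /\
    forall d, C d <-> (reach R c0 d /\ reach R d c0).

Definition is_path (R : seq reaction) (c : nat -> vec) (a : nat -> reaction) : Prop :=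
  forall t, edge R (c t) (a t) (c t.+1).

Definition weakly_fair (R : seq reaction) (c : nat -> vec) (a : nat -> reaction) : Prop :=
  forall t al, applicable R al (c t) ->
    exists t', t <= t' /\ (a t' = al \/ ~ applicable R al (c t')).

Definition escapes (R : seq reaction) (al : reaction) (C : vec -> Prop) : Prop :=
  forall c, C c -> applicable R al c /\ ~ C (apply_rxn al c).

End CRN.

From mathcomp Require Import all_boot.
From Stdlib Require Import Classical.

Set Implicit Arguments. Unset Strict Implicit. Unset Printing Implicit Defensive.

(* A weakly fair execution inside S must eventually either take an escaping
   reaction (leaving S) or reach a configuration where it is inapplicable
   (contradicting escape), so no reaction escapes.  Conversely, if no reaction
   escapes, every reaction al has a witness configuration in S where al is
   inapplicable or leads back into S.  By strong connectivity there is a closed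
   walk in S through a base configuration c0 visiting all witnesses (and taking
   al at its witness when applicable); repeating it forever is a weakly fair
   execution in S.  The walk is nonempty because some unimolecular reaction is
   applicable at c0. *)

Lemma exists_ge_modn (n t i : nat) : 0 < n -> exists2 t', t <= t' & t' %% n = i %% n.
Proof.
move=> n_gt0; exists ((t %/ n).+1 * n + i); last by rewrite modnMDl.
exact: leq_trans (ltnW (ltn_ceil t n_gt0)) (leq_addr _ _).
Qed.

Section Walks.
Variables (sp : finType) (R : seq (reaction sp)).

(* A walk from x to z is the list of its (reaction, target) steps, so its
   configurations are x :: map snd w. *)
Inductive walk : vec sp -> seq (reaction sp * vec sp) -> vec sp -> Prop :=
| walk_nil x : walk x [::] x
| walk_cons x a y w z : edge R x a y -> walk y w z -> walk x ((a, y) :: w) z.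

Lemma walk_cat x w1 y w2 z : walk x w1 y -> walk y w2 z -> walk x (w1 ++ w2) z.
Proof. by elim=> //= x' a y' w z' xy _ IH /IH; apply: walk_cons. Qed.

Lemma walk_last x w z : walk x w z -> last x (map snd w) = z.
Proof. by elim. Qed.

Lemma walk_nth_edge x w z x0 a0 i : walk x w z -> i < size w ->
  edge R (nth x0 (x :: map snd w) i) (nth a0 (map fst w) i)
         (nth x0 (x :: map snd w) i.+1).
Proof.
move=> xwz; elim: xwz i => // {}x a y w' {}z xy ywz IH [|i] /= lt_i_w.
  by case: ywz xy.
exact: IH.
Qed.

Lemma reach_trans x y z : reach R x y -> reach R y z -> reach R x z.
Proof. by elim=> // c a d e cd _ IH /IH; apply: reach_step cd. Qed.

Lemma reach_configl x y : reach R x y -> is_config x.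
Proof. by case=> // c a d e []. Qed.

Lemma reach_configr x y : reach R x y -> is_config y.
Proof. by elim. Qed.

Lemma reach_walk x y : reach R x y -> exists w, walk x w y.
Proof.
elim=> [c _|c a d e cd _ [w dwe]]; first by exists [::]; apply: walk_nil.
by exists ((a, d) :: w); apply: walk_cons cd dwe.
Qed.

Lemma walk_reach x w y : walk x w y -> is_config y -> reach R x y.
Proof.
by elim=> [x' /reach_refl|x' a y' w' z xy _ IH /IH]; last apply: reach_step xy.
Qed.

Lemma exists_applicable (c : vec sp) :
  (forall r : vec sp, 1 <= norm1 r <= 2 -> exists p, (r, p) \in R) ->
  is_config c -> exists al, applicable R al c.
Proof.
move=> unimolecular c_config.
have [s cs_gt0|c_zero] := pickP (fun s => 0 < c s); last first.
  move: c_config; rewrite /is_config /norm1 big1 // => s _.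
  by apply/eqP; rewrite -leqn0 leqNgt c_zero.
pose unit_s : vec sp := [ffun x => (x == s) : nat].
have norm_unit : norm1 unit_s = 1.
  by rewrite /norm1 (bigD1 s) //= big1 => [|x /negbTE xs]; rewrite ffunE ?eqxx ?xs.
have [p Rp] : exists p, (unit_s, p) \in R by apply: unimolecular; rewrite norm_unit.
exists (unit_s, p); split => //; apply/forallP => x /=.
by rewrite ffunE; case: eqP => [->|].
Qed.

Lemma fair_path_no_escape (C : vec sp -> Prop) c a al :
  is_path R c a -> weakly_fair R c a -> (forall t, C (c t)) -> ~ escapes R al C.
Proof.
move=> path_ca fair_ca Cc al_escapes.
have [t' [_ [al_taken|al_blocked]]] := fair_ca 0 al (al_escapes _ (Cc 0)).1.
  have [_ [_ next_t']] := path_ca t'.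
  by apply: (al_escapes _ (Cc t')).2; rewrite -al_taken -next_t'.
exact: al_blocked (al_escapes _ (Cc t')).1.
Qed.

Lemma not_escapes_witness (C : vec sp -> Prop) al : ~ escapes R al C ->
  exists2 c, C c & ~ applicable R al c \/ applicable R al c /\ C (apply_rxn al c).
Proof.
move=> no_escape; apply: NNPP => no_witness; apply: no_escape => c Cc.
have [al_c|al_blocked] := classic (applicable R al c).
  by split=> // C_next; apply: no_witness; exists c => //; right.
by case: no_witness; exists c => //; left.
Qed.

Definition attends (al : reaction sp) (x : vec sp) (w : seq (reaction sp * vec sp)) :=
  al \in map fst w \/ exists2 y, y \in x :: map snd w & ~ applicable R al y.

Lemma attends_subset al x w w' :
  {subset w <= w'} -> attends al x w -> attends al x w'.
Proof.
move=> sub_w [/mapP[[a y] /sub_w w'ay ->]|[y xwy al_blocked]].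
  by left; apply/mapP; exists (a, y).
right; exists y => //; move: xwy; rewrite !inE => /orP[-> //|/mapP[ay /sub_w w'ay ->]].
by rewrite map_f ?orbT.
Qed.

Lemma attends_size al x w : applicable R al x -> attends al x w -> 0 < size w.
Proof. by case: w => // al_x [//|[y]]; rewrite inE => /eqP ->. Qed.

Section StronglyConnectedComponent.
Variables (C : vec sp -> Prop) (c0 : vec sp).
Hypothesis c0_config : is_config c0.
Hypothesis C_def : forall d, C d <-> reach R c0 d /\ reach R d c0.

Lemma SCC_root : C c0.
Proof. by apply/C_def; split; apply: reach_refl. Qed.

Lemma SCC_walk x y : C x -> C y -> exists w, walk x w y.
Proof.
move=> /C_def[_ x_c0] /C_def[c0_y _].
exact: reach_walk (reach_trans x_c0 c0_y).
Qed.

Lemma SCC_config x : C x -> is_config x.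
Proof. by move=> /C_def[/reach_configr]. Qed.

Lemma SCC_convex x y z : C x -> C z -> reach R x y -> reach R y z -> C y.
Proof.
move=> /C_def[c0_x _] /C_def[_ z_c0] xy yz.
by apply/C_def; split; [apply: reach_trans xy | apply: reach_trans z_c0].
Qed.

Lemma walk_SCC x w z : C x -> C z -> walk x w z -> {in x :: map snd w, forall y, C y}.
Proof.
move=> Cx Cz xwz; elim: xwz Cx Cz => [x' Cx' _ y|x' a y w' z' xy ywz IH Cx' Cz'].
  by rewrite inE => /eqP ->.
have yz := walk_reach ywz (SCC_config Cz').
have Cy := SCC_convex Cx' Cz' (reach_step xy (reach_refl _ (reach_configl yz))) yz.
by move=> v; rewrite inE => /orP[/eqP -> //|]; apply: IH.
Qed.

Lemma closed_walk_attends al :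
  ~ escapes R al C -> exists w, walk c0 w c0 /\ attends al c0 w.
Proof.
move=> /not_escapes_witness[c Cc [al_blocked|[al_c C_next]]].
  have [[w1 c0_c] [w2 c_c0]] := (SCC_walk SCC_root Cc, SCC_walk Cc SCC_root).
  exists (w1 ++ w2); split; first exact: walk_cat c0_c c_c0.
  right; exists c => //.
  by rewrite map_cat -cat_cons mem_cat -{1}(walk_last c0_c) mem_last.
have [[w1 c0_c] [w2 next_c0]] := (SCC_walk SCC_root Cc, SCC_walk C_next SCC_root).
exists (w1 ++ (al, apply_rxn al c) :: w2); split.
  by apply: walk_cat c0_c (walk_cons _ next_c0); split; first exact: SCC_config.
by left; rewrite map_cat mem_cat inE eqxx orbT.
Qed.

Lemma closed_walk_attends_all (L : seq (reaction sp)) :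
  (forall al, al \in L -> ~ escapes R al C) ->
  exists w, walk c0 w c0 /\ forall al, al \in L -> attends al c0 w.
Proof.
elim: L => [_|al L IH no_escape]; first by exists [::]; split=> //; apply: walk_nil.
have [w [c0_w_c0 w_attends]] :=
  IH (fun b Lb => no_escape b (mem_behead (s := al :: L) Lb)).
have [w' [c0_w'_c0 w'_attends]] := closed_walk_attends (no_escape al (mem_head al L)).
exists (w' ++ w); split; first exact: walk_cat c0_w'_c0 c0_w_c0.
move=> b; rewrite inE => /orP[/eqP -> | Lb].
  by apply: attends_subset w'_attends => st; rewrite mem_cat => ->.
by apply: attends_subset (w_attends b Lb) => st; rewrite mem_cat orbC => ->.
Qed.

End StronglyConnectedComponent.

Section Loop.
Variables (x : vec sp) (w : seq (reaction sp * vec sp)).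
Hypotheses (x_w_x : walk x w x) (w_nonempty : 0 < size w).

Definition loop_config t := nth x (x :: map snd w) (t %% size w).
(* The default (x, x) is never used: t %% size w < size w. *)
Definition loop_reaction t := nth (x, x) (map fst w) (t %% size w).

Lemma loop_config_nth i : i <= size w -> loop_config i = nth x (x :: map snd w) i.
Proof.
rewrite /loop_config leq_eqVlt => /orP[/eqP ->|lt_i_w]; last by rewrite modn_small.
rewrite modnn -(size_map snd) -[size _]/(size (x :: map snd w)).-1 nth_last /=.
by rewrite (walk_last x_w_x).
Qed.

Lemma loop_config_mem t : loop_config t \in x :: map snd w.
Proof. by rewrite mem_nth //= size_map ltnS ltnW // ltn_pmod. Qed.

Lemma loop_path : is_path R loop_config loop_reaction.
Proof.
move=> t; have lt_tw_w := ltn_pmod t w_nonempty.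
have -> : loop_config t.+1 = loop_config (t %% size w).+1.
  by rewrite /loop_config -addn1 -modnDml addn1.
rewrite (loop_config_nth lt_tw_w).
exact: walk_nth_edge x_w_x lt_tw_w.
Qed.

Lemma loop_fair :
  (forall al, al \in R -> attends al x w) -> weakly_fair R loop_config loop_reaction.
Proof.
move=> w_attends t al [/w_attends[al_taken|[y xwy al_blocked]] _].
  have [i lt_i_w al_i] := nthP (x, x) al_taken.
  have [t' le_t_t' t'_i] := exists_ge_modn t i w_nonempty.
  exists t'; split=> //; left.
  by rewrite /loop_reaction t'_i modn_small // -(size_map fst).
have [i lt_i_w y_i] := nthP x xwy.
have [t' le_t_t' t'_i] := exists_ge_modn t i w_nonempty.
exists t'; split=> //; right.
have -> : loop_config t' = loop_config i by rewrite /loop_config t'_i.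
by rewrite loop_config_nth ?y_i // -ltnS -(size_map snd).
Qed.

End Loop.
End Walks.

Theorem lemma3p1 (sp : finType) (R : seq (reaction sp)) (C : vec sp -> Prop) :
  is_CRN_protocol R -> is_SCC R C ->
  ((exists (c : nat -> vec sp) (a : nat -> reaction sp),
      is_path R c a /\ weakly_fair R c a /\ forall t, C (c t))
   <-> (forall al, al \in R -> ~ escapes R al C)).
Proof.
move=> [_ [unimolecular _]] [c0 [c0_config C_def]]; split.
  by move=> [c [a [path_ca [fair_ca Cc]]]] al _; apply: fair_path_no_escape Cc.
move=> no_escape.
have [w [c0_w_c0 w_attends]] := closed_walk_attends_all c0_config C_def no_escape.
have [al al_c0] := exists_applicable unimolecular c0_config.
have w_nonempty := attends_size al_c0 (w_attends al al_c0.1).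
exists (loop_config c0 w), (loop_reaction c0 w); split; [|split].
- exact: loop_path.
- exact: loop_fair.
- have C_c0 := SCC_root c0_config C_def.
  by move=> t; apply: (walk_SCC C_def C_c0 C_c0 c0_w_c0); apply: loop_config_mem.
Qed.
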